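(* Let $f:\mathbb{R}^n\to\mathbb{R}$ be differentiable and strongly convex, and let $x^0\in\mathbb{R}^n$. For every $\eta>0$ there exists $\tau>0$ such that for every $x\in\mathbb{R}^n$ with $f(x)\le f(x^0)$ and $\|\nabla f(x)\|\ge\eta$ we have $$f(x-t\nabla f(x))\le f(x)-\frac{\eta^2}{2}t\quad\text{for all }t\in[0,\tau].$$
   Context: $\|\cdot\|$ is the Euclidean norm. $f$ is strongly convex with constant $\mu>0$ if $f(tx+(1-t)y)\le tf(x)+(1-t)f(y)-\frac{\mu t(1-t)}{2}\|y-x\|^2$ for all $x,y$ and $t\in[0,1]$. *)

(* R^n is represented as 'rV[R]_n. *)
From HB Require Import structures.
From mathcomp Require Import all_boot all_order all_algebra.
From mathcomp Require Import all_classical all_reals all_analysis.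
Set Implicit Arguments. Unset Strict Implicit. Unset Printing Implicit Defensive.
Import Order.TTheory GRing.Theory Num.Theory.
Import numFieldNormedType.Exports.
Local Open Scope ring_scope.

(* Euclidean norm on R^n (the library norm on matrices is the sup norm). *)
Definition enorm (R : realType) (n : nat) (v : 'rV[R]_n) : R :=
  Num.sqrt (\sum_(i < n) v ord0 i ^+ 2).

Definition grad (R : realType) (n : nat) (f : 'rV[R]_n -> R) (x : 'rV[R]_n)
  : 'rV[R]_n :=
  \row_(i < n) ('d f x (delta_mx ord0 i : 'rV[R]_n)).

Definition strongly_convex_with (R : realType) (n : nat) (f : 'rV[R]_n -> R)
  (mu : R) : Prop :=
  forall (x y : 'rV[R]_n) (t : R), 0 <= t -> t <= 1 ->
    f (t *: x + (1 - t) *: y)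
      <= t * f x + (1 - t) * f y - mu * t * (1 - t) / 2 * enorm (y - x) ^+ 2.

Definition strongly_convex (R : realType) (n : nat) (f : 'rV[R]_n -> R) : Prop :=
  exists2 mu : R, 0 < mu & strongly_convex_with f mu.

(* A differentiable convex function has a continuous gradient: for s > 0 the
   difference quotients of f at x in the directions v and -v bracket 'd f x v,
   and they depend continuously on x.  Hence, for x near a point z and t small,
   the gradients at x and at y = x - t grad f(x) are both close to grad f(z),
   so the tangent inequality f x - f y >= <grad f(y), x - y> gives
   f y <= f x - t <grad f(y), grad f(x)> <= f x - t eta^2/2.  Strong convexity
   bounds the sublevel set {f <= f x0}; being closed, it is compact, and a
   finite cover by such neighbourhoods yields a uniform step bound tau. *)

From HB Require Import structures.
From mathcomp Require Import all_boot all_order all_algebra.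
From mathcomp Require Import all_classical all_reals all_analysis.
From mathcomp Require Import lra.
Import Order.TTheory GRing.Theory Num.Theory.
Import numFieldNormedType.Exports.
Local Open Scope ring_scope.
Local Open Scope classical_set_scope.

Lemma dist_lt_squeeze (R : realFieldType) (a a' l l' u u' e : R) :
  l' <= a' <= u' -> `|a - u| < e / 2 -> `|a - l| < e / 2 ->
  `|l - l'| < e / 2 -> `|u - u'| < e / 2 -> `|a - a'| < e.
Proof.
rewrite !ltr_norml => /andP[? ?] /andP[? ?] /andP[? ?] /andP[? ?] /andP[? ?].
by apply/andP; split; lra.
Qed.

Definition convex_fun {R : realType} {n : nat} (f : 'rV[R]_n -> R) : Prop :=
  forall (x y : 'rV[R]_n) (t : R), 0 <= t -> t <= 1 ->
    f (t *: x + (1 - t) *: y) <= t * f x + (1 - t) * f y.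

Definition sufficient_decrease {R : realType} {n : nat} (f : 'rV[R]_n -> R)
    (eta tau : R) (x : 'rV[R]_n) : Prop :=
  eta <= enorm (grad f x) -> forall t : R, 0 <= t -> t <= tau ->
    f (x - t *: grad f x) <= f x - eta ^+ 2 / 2 * t.

Section RowNorm.
Context {R : realType} {n : nat}.
Implicit Types u : 'rV[R]_n.

Lemma rV_norm_le u (M : R) : 0 <= M -> (forall i, `|u 0 i| <= M) -> `|u| <= M.
Proof.
move=> M0 uM; rewrite /Num.norm /= mx_normrE.
by apply/bigmax_leP; split => // -[i j] _ /=; rewrite (ord1 i).
Qed.

Lemma rV_coord_le_norm u i : `|u 0 i| <= `|u|.
Proof.
rewrite [leRHS]/Num.norm /= mx_normrE.
by apply/bigmax_geP; right; exists (0, i).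
Qed.

Lemma enorm_sqr u : enorm u ^+ 2 = \sum_i u 0 i ^+ 2.
Proof. by rewrite sqr_sqrtr // sumr_ge0 // => i _; exact: sqr_ge0. Qed.

Lemma rV_coord_le_enorm u i : `|u 0 i| <= enorm u.
Proof.
rewrite -ler_sqr ?nnegrE ?sqrtr_ge0 // enorm_sqr real_normK ?num_real //.
by rewrite (bigD1 i) //= lerDl sumr_ge0 // => j _; exact: sqr_ge0.
Qed.

Lemma rV_norm_le_enorm u : `|u| <= enorm u.
Proof. exact/rV_norm_le/rV_coord_le_enorm/sqrtr_ge0. Qed.

Lemma inner_ge_of_close (b c : 'rV[R]_n) (eta d : R) :
  0 <= eta -> eta <= enorm b -> `|c - b| <= d -> n%:R * d ^+ 2 <= eta ^+ 2 / 4 ->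
  eta ^+ 2 / 2 <= \sum_i b 0 i * c 0 i.
Proof.
move=> eta0 eta_b cb_d nd.
have coord_ge i : 3 / 4 * b 0 i ^+ 2 - d ^+ 2 <= b 0 i * c 0 i.
  have := le_trans (rV_coord_le_norm (c - b) i) cb_d; rewrite !mxE ler_norml => /andP[? ?].
  have := sqr_ge0 (b 0 i / 2 + (c 0 i - b 0 i)); nra.
have : \sum_i (3 / 4 * b 0 i ^+ 2 - d ^+ 2) <= \sum_i b 0 i * c 0 i.
  by apply: ler_sum => i _; exact: coord_ge.
rewrite sumrB -mulr_sumr sumr_const card_ord -enorm_sqr -mulr_natr.
have : eta ^+ 2 <= enorm b ^+ 2 by rewrite ler_sqr ?nnegrE // (le_trans eta0).
move: (enorm b ^+ 2) (\sum_i _) => ? ? ? ?; nra.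
Qed.

Lemma enormN u : enorm (- u) = enorm u.
Proof. by rewrite /enorm; congr Num.sqrt; apply: eq_bigr => i _; rewrite mxE sqrrN. Qed.

Lemma enorm_le_of_inner (a g : 'rV[R]_n) (mu : R) : 0 < mu ->
  mu * enorm a ^+ 2 <= - 4 * \sum_i a 0 i * g 0 i -> mu * enorm a <= 4 * enorm g.
Proof.
move=> mu0 inner_le.
have coord_ge i : - (mu ^+ 2 / 8) * a 0 i ^+ 2 - 2 * g 0 i ^+ 2 <= mu * (a 0 i * g 0 i).
  by have := sqr_ge0 (g 0 i + mu * a 0 i / 4); nra.
have : \sum_i (- (mu ^+ 2 / 8) * a 0 i ^+ 2 - 2 * g 0 i ^+ 2) <= \sum_i mu * (a 0 i * g 0 i).
  by apply: ler_sum => i _; exact: coord_ge.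
rewrite sumrB -!mulr_sumr -!enorm_sqr => sum_ge.
have mu_ge0 := ltW mu0.
rewrite -ler_sqr ?nnegrE ?mulr_ge0 ?sqrtr_ge0 //.
move: inner_le sum_ge; rewrite !exprMn.
move: (enorm a ^+ 2) (enorm g ^+ 2) (\sum_i _) => A G S; nra.
Qed.

End RowNorm.

Section ConvexDifferential.
Context {R : realType} {n : nat} {f : 'rV[R]_n -> R}.

Lemma diff_quotient_cvg (a v : 'rV[R]_n) : differentiable f a ->
  h^-1 * (f (h *: v + a) - f a) @[h --> 0^'] --> 'd f a v.
Proof. by move=> fa; rewrite -deriveE //; exact: diff_derivable. Qed.

Lemma diff_grad_sum (x v : 'rV[R]_n) :
  'd f x v = \sum_i v 0 i * grad f x 0 i.
Proof.
rewrite {1}(row_sum_delta v) linear_sum; apply: eq_bigr => i _.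
by rewrite linearZ mxE.
Qed.

Hypothesis f_convex : convex_fun f.

Lemma convex_diff_le (x y : 'rV[R]_n) : differentiable f x ->
  'd f x (y - x) <= f y - f x.
Proof.
move=> fx; have right_sub : (0:R)^'+ `=>` 0^'.
  move=> P /=; rewrite /dnbhs /within /=.
  by apply: filterS => h Ph h0; apply: Ph; rewrite gt_eqF.
have := cvg_trans (cvg_app _ right_sub) (diff_quotient_cvg x (y - x) fx).
move/cvgr_to_le; apply; near=> h.
have h0 : 0 < h by near: h; exact: nbhs_right_gt.
have h1 : h <= 1 by apply: ltW; near: h; exact: nbhs_right_lt.
have := f_convex y x h (ltW h0) h1.
have -> : h *: y + (1 - h) *: x = h *: (y - x) + x.
  by rewrite scalerBr scalerBl scale1r addrA addrAC.
by move=> ?; rewrite mulrC ler_pdivrMr //; nra.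
Unshelve. all: by end_near. Qed.

Lemma convex_diff_bounds (x v : 'rV[R]_n) (s : R) : differentiable f x -> 0 < s ->
  (f x - f (x - s *: v)) / s <= 'd f x v <= (f (x + s *: v) - f x) / s.
Proof.
move=> fx s0; rewrite ler_pdivrMr // ler_pdivlMr //.
have up : s * 'd f x v <= f (x + s *: v) - f x.
  by have := convex_diff_le x (x + s *: v) fx; rewrite addrC addKr linearZ.
have lo : - (s * 'd f x v) <= f (x - s *: v) - f x.
  by have := convex_diff_le x (x - s *: v) fx; rewrite addrC addKr linearN linearZ.
by apply/andP; split; lra.
Qed.

Hypothesis f_diff : forall x, differentiable f x.

Lemma continuous_shift (w : 'rV[R]_n) : continuous (fun x : 'rV[R]_n => f (x + w)).
Proof.
move=> z; apply: continuous_comp; last exact/differentiable_continuous/f_diff.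
exact: cvgD cvg_id (cvg_cst _).
Qed.

Lemma convex_diff_continuous (v : 'rV[R]_n) : continuous (fun x : 'rV[R]_n => 'd f x v).
Proof.
move=> z; apply/(cvgrPdist_lt (FF := nbhs_filter z)) => e e0.
have e2 : 0 < e / 2 by rewrite divr_gt0.
pose up s x := (f (x + s *: v) - f x) / s.
pose lo s x := (f x - f (x - s *: v)) / s.
have [s s0 [up_z lo_z]] : exists2 s, 0 < s &
    `|'d f z v - up s z| < e / 2 /\ `|'d f z v - lo s z| < e / 2.
  have /cvgrPdist_lt /(_ _ e2) := diff_quotient_cvg z v (f_diff z).
  rewrite near_withinE => /nbhs_ballP [d /= d0 Hd].
  pose s := d / 2.
  have s0 : 0 < s by rewrite divr_gt0.
  have ball_s (h : R) : `|h| = s -> ball 0 d h.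
    by rewrite -ball_normE /ball_ /= sub0r normrN => ->; rewrite ltr_pdivrMr // ltr_pMr // ltr1n.
  exists s => //; split.
  - have := Hd s (ball_s _ (gtr0_norm s0)) (lt0r_neq0 s0).
    by rewrite /up [s *: v + z]addrC [s^-1 * _]mulrC.
  - have := Hd (- s) (ball_s _ (etrans (normrN s) (gtr0_norm s0))).
    rewrite oppr_eq0 (lt0r_neq0 s0) => /(_ isT).
    by rewrite /lo invrN mulNr scaleNr [- _ + z]addrC -mulrN opprB mulrC.
have up_cont : {for z, continuous (up s)}.
  apply: (cvgMr_tmp (FF := nbhs_filter z)); apply: (cvgB (FF := nbhs_filter z)).
    exact: continuous_shift.
  exact/differentiable_continuous/f_diff.
have lo_cont : {for z, continuous (lo s)}.
  apply: (cvgMr_tmp (FF := nbhs_filter z)); apply: (cvgB (FF := nbhs_filter z)).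
    exact/differentiable_continuous/f_diff.
  by rewrite -scaleNr; exact: continuous_shift.
have /cvgrPdist_lt /(_ _ e2) := up_cont.
have /cvgrPdist_lt /(_ _ e2) := lo_cont.
apply: filterS2 => x lo_x up_x.
have bounds_x : lo s x <= 'd f x v <= up s x :=
  convex_diff_bounds x v s (f_diff x) s0.
exact: dist_lt_squeeze bounds_x up_z lo_z lo_x up_x.
Qed.

Lemma descent_of_grad_close (x : 'rV[R]_n) (eta d t : R) :
  0 <= eta -> n%:R * d ^+ 2 <= eta ^+ 2 / 4 -> 0 <= t ->
  `|grad f (x - t *: grad f x) - grad f x| <= d -> eta <= enorm (grad f x) ->
  f (x - t *: grad f x) <= f x - eta ^+ 2 / 2 * t.
Proof.
move=> eta0 d_small t0; set g := grad f x; set y := x - t *: g => close eta_g.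
have descent : t * \sum_i g 0 i * grad f y 0 i <= f x - f y.
  by have := convex_diff_le y x (f_diff y); rewrite /y subKr linearZ diff_grad_sum.
have inner : eta ^+ 2 / 2 <= \sum_i g 0 i * grad f y 0 i.
  exact: inner_ge_of_close eta0 eta_g close d_small.
rewrite lerBrDl -lerBrDr mulrC.
exact: le_trans (ler_wpM2l t0 inner) descent.
Qed.

Lemma grad_continuous : continuous (grad f).
Proof.
move=> z; apply/(cvgrPdist_lt (FF := nbhs_filter z)) => e e0.
have e2 : 0 < e / 2 by rewrite divr_gt0.
have coord_near i : \forall x \near z, `|'d f z 'e_i - 'd f x 'e_i| < e / 2.
  by move: (convex_diff_continuous 'e_i z) => /(cvgrPdist_lt (FF := nbhs_filter z)); apply.
move: (filter_forall (nbhs_filter z) coord_near); apply: filterS => x close.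
have /le_lt_trans -> // : `|grad f z - grad f x| <= e / 2.
  by apply: rV_norm_le => [|i]; [exact: ltW | rewrite !mxE; exact: ltW].
by rewrite ltr_pdivrMr // ltr_pMr // ltr1n.
Qed.

Lemma grad_locally_close (z : 'rV[R]_n) (eps : R) : 0 < eps ->
  exists2 d : R, 0 < d & forall w, `|z - w| < d -> `|grad f z - grad f w| < eps.
Proof.
move=> eps0; have /(cvgrPdist_lt (FF := nbhs_filter z)) /(_ _ eps0) := grad_continuous z.
by move=> /nbhs_ballP [d /= d0 close]; exists d => // w zw; apply: close; rewrite -ball_normE.
Qed.

Lemma sufficient_decrease_near (eta : R) (z : 'rV[R]_n) : 0 < eta ->
  \forall x \near z & tau \near 0^'+, sufficient_decrease f eta tau x.
Proof.
move=> eta0; pose eps := eta / (4 * n.+1%:R).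
have eps0 : 0 < eps by rewrite divr_gt0 // mulr_gt0.
have eps_small : n%:R * (eps + eps) ^+ 2 <= eta ^+ 2 / 4.
  have -> : eta = 4 * (n%:R + 1) * eps.
    by rewrite natr1 mulrC divfK // gt_eqF // mulr_gt0.
  have : 0 <= n%:R :> R by []; move: (n%:R : R) => N N0.
  have := sqr_ge0 eps; nra.
have [d d0 grad_close] := grad_locally_close z eps eps0.
pose M := `|grad f z| + eps.
have grad_bound w : `|z - w| < d -> `|grad f w| <= M.
  move=> /grad_close zw; rewrite -[grad f w](subKr (grad f z)) /M.
  by apply: le_trans (ler_normB _ _) _; rewrite lerD2l ltW.
pose tau0 := d / 2 / (M + 1).
have M1_gt0 : 0 < M + 1 by rewrite ltr_wpDl // addr_ge0 // ltW.
have tau0_gt0 : 0 < tau0 by rewrite !divr_gt0.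
exists (ball z (d / 2), [set tau | tau < tau0]) => /=.
  split; last exact: nbhs_right_lt.
  by apply/nbhs_ballP; exists (d / 2) => //=; rewrite divr_gt0.
move=> [x tau] /= [+ tau_lt]; rewrite -ball_normE /= => zx eta_gx t t0 t_tau.
have half_lt : d / 2 < d by rewrite ltr_pdivrMr // ltr_pMr // ltr1n.
set g := grad f x; set y := x - t *: g.
have step_small : t * `|g| <= d / 2.
  rewrite -[d / 2](divfK (lt0r_neq0 M1_gt0)) -/tau0.
  apply: ler_pM => //; first exact: le_trans t_tau (ltW tau_lt).
  by apply: le_trans (grad_bound x (lt_trans zx half_lt)) _; rewrite lerDl.
have zy : `|z - y| < d.
  rewrite /y opprD opprK addrA; apply: le_lt_trans (ler_normD _ _) _.
  rewrite normrZ ger0_norm //; apply: lt_le_trans (ltr_leD zx step_small) _.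
  by rewrite -splitr.
apply: descent_of_grad_close (ltW eta0) eps_small t0 _ eta_gx.
have zy_close := grad_close y zy; rewrite distrC in zy_close.
have zx_close := grad_close x (lt_trans zx half_lt).
exact: le_trans (ler_distD (grad f z) _ _) (lerD (ltW zy_close) (ltW zx_close)).
Qed.

End ConvexDifferential.

Lemma strongly_convex_convex {R : realType} {n : nat} {f : 'rV[R]_n -> R} {mu : R} :
  0 <= mu -> strongly_convex_with f mu -> convex_fun f.
Proof.
move=> mu0 f_sc x y t t0 t1; apply: le_trans (f_sc x y t t0 t1) _.
rewrite lerBlDr lerDl mulr_ge0 ?sqr_ge0 // mulr_ge0 // mulr_ge0 ?subr_ge0 //.
exact: mulr_ge0.
Qed.

Section StronglyConvex.
Context {R : realType} {n : nat} {f : 'rV[R]_n -> R} {mu : R}.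
Hypotheses (mu_gt0 : 0 < mu) (f_sc : strongly_convex_with f mu).

Lemma strongly_convex_sublevel_enorm (x0 x : 'rV[R]_n) : differentiable f x0 ->
  f x <= f x0 -> mu * enorm (x - x0) <= 4 * enorm (grad f x0).
Proof.
move=> fx0 fx_le; apply: enorm_le_of_inner => //.
pose w := (1 / 2) *: x + (1 - 1 / 2) *: x0.
have half0 : 0 <= 1 / 2 :> R by rewrite divr_ge0.
have half1 : 1 / 2 <= 1 :> R by rewrite ler_pdivrMr // mul1r ler1n.
have mid_le := f_sc x x0 (1 / 2) half0 half1; rewrite -/w -[x0 - x]opprB enormN in mid_le.
have tangent := convex_diff_le (strongly_convex_convex (ltW mu_gt0) f_sc) x0 w fx0.
have half_step : w - x0 = (1 / 2) *: (x - x0).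
  by rewrite /w scalerBr scalerBl scale1r addrCA [x0 + _]addrC addrK.
rewrite half_step linearZ diff_grad_sum /= in tangent.
move: mid_le (tangent : 1 / 2 * _ <= _).
move: (enorm _ ^+ 2) (\sum_i _) (f w) => E S fw; nra.
Qed.

Hypothesis f_diff : forall x, differentiable f x.

Lemma strongly_convex_sublevel_compact (x0 : 'rV[R]_n) : compact [set x | f x <= f x0].
Proof.
apply: bounded_closed_compact; last first.
  apply: (@preimage_closed _ _ f [set r | r <= f x0]); last exact: closed_le.
  by move=> x _; exact: differentiable_continuous.
rewrite /bounded_set /bounded_near; near=> M => x /= fx_le.
have : `|x| <= `|x0| + 4 * enorm (grad f x0) / mu.
  rewrite -[x](subrK x0) addrC; apply: le_trans (ler_normD _ _) _.
  rewrite lerD2l ler_pdivlMr // mulrC.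
  apply: le_trans (strongly_convex_sublevel_enorm x0 x (f_diff x0) fx_le).
  by rewrite ler_pM2l // rV_norm_le_enorm.
move/le_trans; apply; near: M; exact/nbhs_pinfty_ge/num_real.
Unshelve. all: by end_near. Qed.

End StronglyConvex.

Theorem proposition5 (R : realType) (n : nat) (f : 'rV[R]_n -> R)
  (hdiff : forall x : 'rV[R]_n, differentiable f x)
  (hsc : strongly_convex f) (x0 : 'rV[R]_n) (eta : R) (heta : 0 < eta) :
  exists2 tau : R, 0 < tau &
    forall x : 'rV[R]_n, f x <= f x0 -> eta <= enorm (grad f x) ->
      forall t : R, 0 <= t -> t <= tau ->
        f (x - t *: grad f x) <= f x - eta ^+ 2 / 2 * t.
Proof.
have [mu mu_gt0 f_sc] := hsc.
have f_convex := strongly_convex_convex (ltW mu_gt0) f_sc.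
have /(compact_near_coveringP _).1 /(_ R 0^'+ (sufficient_decrease f eta)) :=
  strongly_convex_sublevel_compact mu_gt0 f_sc hdiff x0.
move=> /(_ _ (fun z _ => sufficient_decrease_near f_convex hdiff eta z heta)) uniform.
have : \forall tau \near 0^'+, 0 < tau /\
    [set x | f x <= f x0] `<=` sufficient_decrease f eta tau.
  by near=> tau; split; [near: tau; exact: nbhs_right_gt | near: tau].
move=> /filter_ex [tau [tau_gt0 decrease]].
by exists tau => // x /decrease.
Unshelve. all: by end_near. Qed.
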